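(* Let $G$ be a simple digraph with $n$ vertices $v_1,\ldots,v_n$ and $m$ arcs, having no isolated vertices, and let $M_1=m+\frac12\sum_{i=1}^n(d_i^+-d_i^-)^2$. Then $SLE(G)\le 2M_1$.
   Context: A simple digraph is an orientation of a simple undirected graph (no loops, and between two distinct vertices at most one arc, in one direction). $d_i^+,d_i^-$ are the out- and in-degree of $v_i$; a vertex is isolated if $d_i^++d_i^-=0$. The skew-adjacency matrix $S(G)=[s_{ij}]$ has $s_{ij}=1$ if $(v_i,v_j)$ is an arc, $s_{ij}=-1$ if $(v_j,v_i)$ is an arc, and $0$ otherwise. $\widetilde{D}(G)=\mathrm{diag}(d_1^+-d_1^-,\ldots,d_n^+-d_n^-)$, $\widetilde{SL}(G)=\widetilde{D}(G)-S(G)$, and $SLE(G)=\sum_{i=1}^n|\mu_i|$ where $\mu_1,\ldots,\mu_n$ are the eigenvalues of $\widetilde{SL}(G)$ counted with algebraic multiplicity. *)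

From HB Require Import structures.
From mathcomp Require Import all_boot all_order all_algebra all_field.
Set Implicit Arguments. Unset Strict Implicit. Unset Printing Implicit Defensive.
Import Order.TTheory GRing.Theory Num.Theory.
Local Open Scope ring_scope.

(* A simple digraph on vertex set 'I_n given by its arc relation:
   at most one arc between two vertices (hence no loops). *)
Definition simple_digraph (n : nat) (arc : rel 'I_n) : Prop :=
  forall i j, arc i j -> ~~ arc j i.

Definition num_arcs (n : nat) (arc : rel 'I_n) : nat :=
  #|[set p : 'I_n * 'I_n | arc p.1 p.2]|.

Definition outdeg (n : nat) (arc : rel 'I_n) (i : 'I_n) : nat := #|[set j | arc i j]|.
Definition indeg (n : nat) (arc : rel 'I_n) (i : 'I_n) : nat := #|[set j | arc j i]|.

Definition no_isolated (n : nat) (arc : rel 'I_n) : Prop :=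
  forall i, outdeg arc i + indeg arc i != 0%N.

Definition skew_adj (n : nat) (arc : rel 'I_n) : 'M[algC]_n :=
  \matrix_(i, j) ((arc i j)%:R - (arc j i)%:R).

Definition Dtilde (n : nat) (arc : rel 'I_n) : 'M[algC]_n :=
  diag_mx (\row_i ((outdeg arc i)%:R - (indeg arc i)%:R)).

Definition skew_lap (n : nat) (arc : rel 'I_n) : 'M[algC]_n :=
  Dtilde arc - skew_adj arc.

Definition M1 (n : nat) (arc : rel 'I_n) : algC :=
  (num_arcs arc)%:R +
  2^-1 * \sum_i ((outdeg arc i)%:R - (indeg arc i)%:R) ^+ 2.

(* Schur's inequality bounds the sum of the squared moduli of the eigenvalues
   of a complex matrix by the sum of the squared moduli of its entries; for
   SL(G) the latter is sum_i (d_i^+ - d_i^-)^2 + 2m. Combining this with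
   2|z| <= |z|^2 + 1 and n <= 2m (no isolated vertices) gives
   2 SLE(G) <= sum_i (d_i^+ - d_i^-)^2 + 4m <= 4 M_1. *)
From HB Require Import structures.
From mathcomp Require Import all_boot all_order all_algebra all_field.
Set Implicit Arguments. Unset Strict Implicit. Unset Printing Implicit Defensive.
Import Order.TTheory GRing.Theory Num.Theory Num.Def.
Local Open Scope ring_scope.
Local Open Scope sesquilinear_scope.

Lemma char_poly_conj (R : comUnitRingType) n (P A : 'M[R]_n) :
  P \in unitmx -> char_poly (P *m A *m invmx P) = char_poly A.
Proof.
move=> Punit; set Q := map_mx polyC P; set Qi := map_mx polyC (invmx P).
have QQi : Q *m Qi = 1%:M by rewrite -map_mxM mulmxV // map_mx1.
have QiQ : Qi *m Q = 1%:M by rewrite -map_mxM mulVmx // map_mx1.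
rewrite /char_poly.
have -> : char_poly_mx (P *m A *m invmx P) = Q *m char_poly_mx A *m Qi.
  rewrite /char_poly_mx mulmxBr mulmxBl !map_mxM; congr (_ - _).
  by rewrite -mulmxA -scalar_mxC mulmxA QQi mul1mx.
by rewrite !det_mulmx mulrC mulrA -det_mulmx QiQ det1 mul1r.
Qed.

Lemma mul2_norm_le_sqrD1 (R : numDomainType) (x : R) : 2 * `|x| <= `|x| ^+ 2 + 1.
Proof.
have : 0 <= (`|x| - 1) ^+ 2 by rewrite -realEsqr rpredB ?normr_real ?real1.
by rewrite sqrrB expr1n mulr1 addrAC subr_ge0 mulr_natl.
Qed.

Lemma mul2_sum_norm_le (R : numDomainType) (s : seq R) :
  2 * \sum_(z <- s) `|z| <= \sum_(z <- s) `|z| ^+ 2 + (size s)%:R.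
Proof.
rewrite mulr_sumr -[(size s)%:R]mulr1 -sum1_size natr_sum mulr_suml -big_split.
by apply: ler_sum => z _; rewrite mul1r mul2_norm_le_sqrD1.
Qed.

Section SchurInequality.

Variable C : numClosedFieldType.

Definition frobenius2 m n (A : 'M[C]_(m, n)) := \sum_i \sum_j `|A i j| ^+ 2.

Lemma mxtrace_mul_trmxC n (A : 'M[C]_n) : \tr (A *m A ^t*) = frobenius2 A.
Proof.
apply: eq_bigr => i _; rewrite mxE; apply: eq_bigr => j _.
by rewrite !mxE normCK.
Qed.

Lemma frobenius2_unitary_conj n (P A : 'M[C]_n) :
  P \is unitarymx -> frobenius2 (P *m A *m P ^t*) = frobenius2 A.
Proof.
move=> Punitary; rewrite -!mxtrace_mul_trmxC !trmx_mul !map_mxM trmxCK.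
by rewrite mulmxA mulmxKtV // -mulmxA mxtrace_mulC mulmxA mulmxKtV.
Qed.

Lemma unitary_trig_similar n (A : 'M[C]_n) :
  exists2 T : 'M[C]_n, is_trig_mx T &
    char_poly T = char_poly A /\ frobenius2 T = frobenius2 A.
Proof.
case: (posnP n) => [n0 | n_gt0].
  by exists A => //; apply/is_trig_mxP => -[i i_lt]; exfalso; rewrite n0 in i_lt.
have [P Punitary PAtrig] := Schur A n_gt0.
exists (conjmx P A) => //; rewrite conjymx //; split.
  by rewrite -invmx_unitary // char_poly_conj // unitarymx_unit.
exact: frobenius2_unitary_conj.
Qed.

Lemma schur_inequality n (A : 'M[C]_n) (s : seq C) :
  char_poly A = \prod_(z <- s) ('X - z%:P) ->
  \sum_(z <- s) `|z| ^+ 2 <= frobenius2 A.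
Proof.
move=> charA; have [T Ttrig [charT <-]] := unitary_trig_similar A.
have diagT : perm_eq s [seq T i i | i <- enum 'I_n].
  by apply: prod_XsubC_eq; rewrite big_map big_enum -char_poly_trig ?charT.
rewrite (perm_big _ diagT) big_map big_enum; apply: ler_sum => i _.
by rewrite (bigD1 i) //= lerDl sumr_ge0 // => j _; rewrite exprn_ge0.
Qed.

Lemma mul2_sum_norm_roots_le n (A : 'M[C]_n) (s : seq C) :
  char_poly A = \prod_(z <- s) ('X - z%:P) ->
  2 * \sum_(z <- s) `|z| <= frobenius2 A + n%:R.
Proof.
move=> charA; have size_s : size s = n.
  by apply/eqP; rewrite -eqSS -(size_prod_XsubC _ id) -charA size_char_poly.
by rewrite (le_trans (mul2_sum_norm_le s)) // size_s lerD2r schur_inequality.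
Qed.

End SchurInequality.

Section SkewLaplacian.

Variables (n : nat) (arc : rel 'I_n).

Definition deg_diff i : algC := (outdeg arc i)%:R - (indeg arc i)%:R.

Lemma num_arcsE : num_arcs arc = (\sum_i \sum_j arc i j)%N.
Proof.
rewrite /num_arcs -sum1_card pair_bigA big_mkcond /=.
by apply: eq_bigr => p _; rewrite inE; case: (arc _ _).
Qed.

Lemma outdegE i : outdeg arc i = (\sum_j arc i j)%N.
Proof.
rewrite /outdeg -sum1_card big_mkcond /=.
by apply: eq_bigr => j _; rewrite inE; case: (arc _ _).
Qed.

Lemma indegE i : indeg arc i = (\sum_j arc j i)%N.
Proof.
rewrite /indeg -sum1_card big_mkcond /=.
by apply: eq_bigr => j _; rewrite inE; case: (arc _ _).
Qed.

Lemma sum_outdeg_indeg :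
  (\sum_i (outdeg arc i + indeg arc i) = 2 * num_arcs arc)%N.
Proof.
rewrite big_split mul2n -addnn num_arcsE {2}exchange_big /=.
by congr (_ + _)%N; apply: eq_bigr => i _; rewrite ?outdegE ?indegE.
Qed.

Lemma no_isolated_leq : no_isolated arc -> (n <= 2 * num_arcs arc)%N.
Proof.
move=> noiso; rewrite -sum_outdeg_indeg -{1}(card_ord n) -sum1_card.
by apply: leq_sum => i _; rewrite lt0n noiso.
Qed.

Hypothesis arc_simple : simple_digraph arc.

Lemma arc_irrefl i : arc i i = false.
Proof. by apply/negP => aii; have := arc_simple aii; rewrite aii. Qed.

Lemma skew_lap_sqr i j :
  `|skew_lap arc i j| ^+ 2 =
    (i == j)%:R * deg_diff i ^+ 2 + (arc i j)%:R + (arc j i)%:R.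
Proof.
rewrite !mxE; have [<- | ij] := eqVneq i j.
  by rewrite arc_irrefl subrr subr0 !addr0 mul1r real_normK // rpredB ?realn.
rewrite mul0r !add0r normrN.
case aij: (arc i j); case aji: (arc j i) => /=.
- by have := arc_simple aij; rewrite aji.
- by rewrite subr0 normr1 expr1n addr0.
- by rewrite sub0r normrN normr1 expr1n add0r.
- by rewrite subrr normr0 expr0n add0r.
Qed.

Lemma frobenius2_skew_lap :
  frobenius2 (skew_lap arc) = \sum_i deg_diff i ^+ 2 + 2 * (num_arcs arc)%:R.
Proof.
rewrite /frobenius2; under eq_bigr => i _ do
  rewrite (eq_bigr _ (fun j _ => skew_lap_sqr i j)) !big_split /=.
rewrite !big_split /= -addrA mulr_natl mulr2n; congr (_ + (_ + _)).
- apply: eq_bigr => i _; rewrite (bigD1 i) //= eqxx mul1r big1 ?addr0 //.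
  by move=> j; rewrite eq_sym => /negbTE->; rewrite mul0r.
- by rewrite num_arcsE natr_sum; apply: eq_bigr => i _; rewrite natr_sum.
- rewrite num_arcsE exchange_big natr_sum.
  by apply: eq_bigr => i _; rewrite natr_sum.
Qed.

End SkewLaplacian.

Theorem corollary3 (n : nat) (arc : rel 'I_n) (eigs : seq algC) :
  simple_digraph arc -> no_isolated arc ->
  char_poly (skew_lap arc) = \prod_(z <- eigs) ('X - z%:P) ->
  \sum_(z <- eigs) `|z| <= 2 * M1 arc.
Proof.
move=> simple noiso charL.
set S := \sum_i deg_diff arc i ^+ 2; set m : algC := (num_arcs arc)%:R.
have M1E : 2 * M1 arc = S + 2 * m.
  by rewrite /M1 mulrDr mulrA divff ?pnatr_eq0 // mul1r addrC.
have S_ge0 : 0 <= S by apply: sumr_ge0 => i _; rewrite -realEsqr rpredB ?realn.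
have n_le : n%:R <= 2 * m :> algC by rewrite -natrM ler_nat no_isolated_leq.
have bound := mul2_sum_norm_roots_le charL.
rewrite frobenius2_skew_lap // -/S -/m in bound.
rewrite M1E -(ler_pM2l (_ : 0 < 2 :> algC)) ?ltr0n // (le_trans bound) //.
rewrite [X in _ <= X]mulr_natl -[(S + _) *+ 2]/(S + 2 * m + (S + 2 * m)).
by rewrite lerD2l (le_trans n_le) // lerDr.
Qed.
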